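(* Let $E=\mathbb{R}^n$, let $d\ge 1$ be an integer, $m\in(0,1)$, $a>0$, and let $\mu$ be a probability measure on $E$ such that for every $x\in\operatorname{supp}\mu$ and every $r<(m/a)^{1/d}$ we have $\mu(B(x,r))\ge a r^d$, where $B(x,r)$ is the open ball. Then $c(\mu):=\sup_{x\in\operatorname{supp}\mu} d_{\mu,m}(x)\le a^{-1/d} m^{1/d}$.
   Context: For a probability measure $\mu$ on $E$, $t\in[0,1)$ and $x\in E$, let $\delta_{\mu,t}(x)=\inf\{r\ge 0:\ \mu(\bar B(x,r))>t\}$, where $\bar B(x,r)$ is the closed Euclidean ball. The distance to measure (DTM) with parameter $m$ is the function $d_{\mu,m}:E\to\mathbb{R}$ defined by $d_{\mu,m}^2(x)=\frac1m\int_0^m\delta_{\mu,t}^2(x)\,dt$. *)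

From mathcomp Require Import all_boot all_order all_algebra.
From mathcomp Require Import all_classical all_reals all_analysis.
Set Implicit Arguments. Unset Strict Implicit. Unset Printing Implicit Defensive.
Import Order.TTheory GRing.Theory Num.Theory.
Local Open Scope classical_set_scope.
Local Open Scope ring_scope.

(* E = R^n is modelled by n.-tuple R, which MathComp-Analysis equips with the
   product sigma-algebra (= the Borel sigma-algebra of R^n). *)

Definition edist (R : realType) (n : nat) (x y : n.-tuple R) : R :=
  Num.sqrt (\sum_(i < n) (tnth x i - tnth y i) ^+ 2).

Definition oball (R : realType) (n : nat) (x : n.-tuple R) (r : R) :
  set (n.-tuple R) := [set y | edist x y < r].

Definition cball (R : realType) (n : nat) (x : n.-tuple R) (r : R) :
  set (n.-tuple R) := [set y | edist x y <= r].

Definition supp (R : realType) (n : nat)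
  (mu : probability (n.-tuple R) R) : set (n.-tuple R) :=
  [set x | forall r : R, 0 < r -> (0 < mu (oball x r))%E].

Definition delta_mu (R : realType) (n : nat)
  (mu : probability (n.-tuple R) R) (t : R) (x : n.-tuple R) : R :=
  inf [set r : R | 0 <= r /\ (t%:E < mu (cball x r))%E].

Definition dtm (R : realType) (n : nat)
  (mu : probability (n.-tuple R) R) (m : R) (x : n.-tuple R) : R :=
  Num.sqrt (m^-1 * fine (\int[lebesgue_measure]_(t in `[0%R, m]%classic)
                           ((delta_mu mu t x) ^+ 2)%:E)).

From Pilot Require Import Defs.
From mathcomp Require Import all_boot all_order all_algebra.
From mathcomp Require Import all_classical all_reals all_analysis.
From mathcomp Require Import measurable_realfun.
Set Implicit Arguments. Unset Strict Implicit. Unset Printing Implicit Defensive.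
Import Order.TTheory GRing.Theory Num.Theory.
Local Open Scope classical_set_scope.
Local Open Scope ring_scope.

(* Put r0 := (m/a)^(1/d), so that a r0^d = m.  For x in the support and
   0 <= t < m, some r < r0 has a r^d > t, whence mu(B(x,r)) > t and
   delta_{mu,t}(x) <= r0.  Squaring and averaging over [0, m] gives
   d_{mu,m}(x) <= r0; the integrand is measurable because t |-> delta_{mu,t}(x)
   is nondecreasing on [0, m[. *)

Section powR_roots.
Context {R : realType}.

Lemma powR_inv_natK (x : R) (d : nat) : 0 <= x -> (0 < d)%N ->
  (x `^ (d%:R)^-1) ^+ d = x.
Proof.
move=> x0 d0.
by rewrite -powR_mulrn ?powR_ge0// -powRrM mulVf ?pnatr_eq0 -?lt0n// powRr1.
Qed.

Lemma powR_div (x y r : R) : 0 <= x -> 0 <= y ->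
  (x / y) `^ r = x `^ r / y `^ r.
Proof.
move=> x0 y0; rewrite powRM ?invr_ge0// -(powR_inv1 y0) -powRrM mulN1r.
by rewrite powRN.
Qed.

Lemma exists_lt_mulrXn (a r0 t : R) (d : nat) :
  0 < a -> 0 < r0 -> (0 < d)%N ->
  0 <= t < a * r0 ^+ d -> exists r, 0 < r < r0 /\ t < a * r ^+ d.
Proof.
move=> a0 r00 d0 /andP[t0 tr0].
pose s := (t / a) `^ (d%:R)^-1.
have s0 : 0 <= s by exact: powR_ge0.
have sdE : s ^+ d = t / a by rewrite powR_inv_natK// divr_ge0// ltW.
have sr0 : s < r0.
  by rewrite -(ltr_pXn2r d0) ?nnegrE ?(ltW r00)// sdE ltr_pdivrMr // mulrC.
exists ((s + r0) / 2); split.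
  apply/andP; split; first by rewrite divr_gt0// ltr_wpDl.
  by rewrite ltr_pdivrMr// mulrDr mulr1 ltrD2r.
rewrite mulrC -ltr_pdivrMr// -sdE ltr_pXn2r// ?nnegrE//; last first.
  by rewrite divr_ge0// addr_ge0// ltW.
by rewrite ltr_pdivlMr// mulrDr mulr1 ltrD2l.
Qed.

End powR_roots.

Lemma nondecreasing_in_measurable {R : realType} (D : set R) (f : R -> R) :
  is_interval D -> {in D &, nondecreasing_fun f} -> measurable_fun D f.
Proof.
move=> iD f_nd.
apply: (measurability (@RGenCInfty.G R)) => [|/= _ [_] [r] -> <-].
  exact: RGenCInfty.measurableE.
apply: is_interval_measurable => s t /= [Ds fs] [Dt ft] u sut.
split; first exact: iD sut.
move: fs; rewrite !in_itv/= !andbT => /le_trans; apply.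
by apply: f_nd; rewrite ?inE//; [exact: iD sut | case/andP: sut].
Qed.

Section euclidean_balls.
Context {R : realType} {n : nat}.
Implicit Types (x : n.-tuple R) (r : R).

(* Qualified: plain [edist] is the extended distance of MathComp-Analysis. *)
Lemma measurable_edist x : measurable_fun setT (Defs.edist x).
Proof.
apply: (@measurable_comp _ _ _ _ _ _ setT (@Num.sqrt R)) => //.
  exact: nondecreasing_measurable (@ler_wsqrtr R).
apply: measurable_sum => i; apply: measurable_funX.
by apply: measurable_funB => //; exact: measurable_tnth.
Qed.

Lemma measurable_oball x r : measurable (oball x r).
Proof.
have := measurable_edist x measurableT (measurable_itv `]-oo, r[).
by rewrite setTI; congr measurable; apply/seteqP; split => y /=; rewrite in_itv.
Qed.

Lemma measurable_cball x r : measurable (cball x r).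
Proof.
have := measurable_edist x measurableT (measurable_itv `]-oo, r]).
by rewrite setTI; congr measurable; apply/seteqP; split => y /=; rewrite in_itv.
Qed.

End euclidean_balls.

Section delta_mu.
Context {R : realType} {n : nat} (mu : probability (n.-tuple R) R).
Context (x : n.-tuple R).

Lemma delta_mu_ge0 t : 0 <= delta_mu mu t x.
Proof.
rewrite /delta_mu; set S := [set r | _].
have [->|/set0P S_ne] := eqVneq S set0; first by rewrite inf0.
by apply: lb_le_inf S_ne _ => y [].
Qed.

Lemma delta_mu_le t r : 0 <= r -> (t%:E < mu (cball x r))%E ->
  delta_mu mu t x <= r.
Proof. by move=> r0 tr; apply: ge_inf; [exists 0 => y [] | split]. Qed.

(* The radius hypothesis is needed since [inf set0 = 0]. *)
Lemma le_delta_mu t s : t <= s ->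
  (exists r, 0 <= r /\ (s%:E < mu (cball x r))%E) ->
  delta_mu mu t x <= delta_mu mu s x.
Proof.
move=> ts [r Sr]; apply: lb_le_inf; first by exists r.
move=> y [y0 sy]; apply: delta_mu_le => //.
by apply: le_lt_trans sy; rewrite lee_fin.
Qed.

Section growth.
Variables (a r0 : R) (d : nat).
Hypotheses (a_gt0 : 0 < a) (r0_gt0 : 0 < r0) (d_gt0 : (0 < d)%N).
Hypothesis growth :
  forall r, 0 < r < r0 -> ((a * r ^+ d)%:E <= mu (oball x r))%E.

Lemma lt_mu_cball_growth t : 0 <= t < a * r0 ^+ d ->
  exists r, 0 < r < r0 /\ (t%:E < mu (cball x r))%E.
Proof.
move=> /(exists_lt_mulrXn a_gt0 r0_gt0 d_gt0)[r [rr0 tr]].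
have oball_le_cball : (mu (oball x r) <= mu (cball x r))%E.
  by apply: le_measure; rewrite ?inE;
    [exact: measurable_oball | exact: measurable_cball | move=> y /ltW].
exists r; split => //.
rewrite (lt_le_trans _ oball_le_cball)//.
by rewrite (lt_le_trans _ (growth rr0)) ?lte_fin.
Qed.

Lemma delta_mu_le_growth t : 0 <= t < a * r0 ^+ d -> delta_mu mu t x <= r0.
Proof.
case/lt_mu_cball_growth => r [/andP[r_gt0 rr0] tr].
by apply: le_trans (ltW rr0); exact: delta_mu_le (ltW r_gt0) tr.
Qed.

Lemma delta_mu_nondecreasing_growth :
  {in `[0, a * r0 ^+ d[%classic &, nondecreasing_fun (delta_mu mu ^~ x)}.
Proof.
move=> t s _; rewrite inE/= in_itv/=.
move=> /lt_mu_cball_growth[r [/andP[r_gt0 _] sr]] ts.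
by apply: le_delta_mu ts _; exists r; split => //; exact: ltW.
Qed.

End growth.
End delta_mu.

Lemma dtm_le {R : realType} {n : nat} (mu : probability (n.-tuple R) R)
    (x : n.-tuple R) (m c : R) :
  0 < m -> 0 <= c -> measurable_fun `[0, m[ (delta_mu mu ^~ x) ->
  (forall t, 0 <= t < m -> delta_mu mu t x <= c) -> dtm mu m x <= c.
Proof.
move=> m_gt0 c_ge0 mdelta delta_le_c.
set I := (\int[lebesgue_measure]_(t in `[0%R, m]%classic)
            (delta_mu mu t x ^+ 2)%:E)%E.
have mdelta2 : measurable_fun `[0, m[ (fun t => (delta_mu mu t x ^+ 2)%:E).
  by apply/measurable_EFinP; exact: measurable_funX.
have I_ge0 : (0 <= I)%E by apply: integral_ge0 => t _; rewrite lee_fin sqr_ge0.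
have I_le : (I <= (c ^+ 2 * m)%:E)%E.
  (* the endpoint t = m, where delta may exceed c, is Lebesgue-null *)
  rewrite /I -integral_itv_bndo_bndc//.
  apply: (@le_trans _ _
    (\int[lebesgue_measure]_(t in `[0%R, m[%classic) (c ^+ 2)%:E)%E).
    apply: ge0_le_integral => //.
    - by move=> t _; rewrite lee_fin sqr_ge0.
    - move=> t; rewrite /= in_itv/= => tm; rewrite lee_fin.
      by rewrite ler_pXn2r ?nnegrE ?delta_mu_ge0 ?delta_le_c.
  by rewrite integral_cst//= lebesgue_measure_itv/= lte_fin m_gt0 sube0.
have I_fin : I \is a fin_num by rewrite ge0_fin_numE// (le_lt_trans I_le) ?ltry.
rewrite /dtm -(ger0_norm c_ge0) -sqrtr_sqr ler_wsqrtr// ler_pdivrMl//.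
by rewrite mulrC; exact: fine_le I_le.
Qed.

Theorem lemma1p4 (R : realType) (n d : nat) (m a : R)
  (mu : probability (n.-tuple R) R) :
  (1 <= d)%N -> 0 < m < 1 -> 0 < a ->
  (forall x, supp mu x ->
     forall r : R, 0 < r -> r < (m / a) `^ (d%:R)^-1 ->
       ((a * r ^+ d)%:E <= mu (oball x r))%E) ->
  (ereal_sup [set (dtm mu m x)%:E | x in supp mu] <=
     (a `^ (- (d%:R)^-1) * m `^ (d%:R)^-1)%:E)%E.
Proof.
move=> d_gt0 /andP[m_gt0 _] a_gt0 growth.
rewrite powRN mulrC -powR_div ?(ltW m_gt0) ?(ltW a_gt0)//.
set r0 := (m / a) `^ _.
have r0_gt0 : 0 < r0 by rewrite powR_gt0// divr_gt0.
have mE : a * r0 ^+ d = m.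
  rewrite powR_inv_natK ?divr_ge0 ?(ltW m_gt0) ?(ltW a_gt0)//.
  by rewrite mulrC divfK ?gt_eqF.
apply: ge_ereal_sup => _ [x x_supp <-]; rewrite lee_fin.
have growth_x r : 0 < r < r0 -> ((a * r ^+ d)%:E <= mu (oball x r))%E.
  by case/andP; exact: growth.
apply: dtm_le (ltW r0_gt0) _ _ => //.
  apply: nondecreasing_in_measurable; first exact: interval_is_interval.
  rewrite -mE.
  exact: delta_mu_nondecreasing_growth a_gt0 r0_gt0 d_gt0 growth_x.
by rewrite -mE; exact: delta_mu_le_growth a_gt0 r0_gt0 d_gt0 growth_x.
Qed.
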